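(* Under the setting below, for every $x\in\mathbb R^d$ and every realization of the algorithm, $$\sum_{t\in\mathcal B}\gamma\big(f(x^t)-f(x)\big)+\sum_{t\in\mathcal N}\gamma\big(c-g(x)\big)\le\frac12\|x^0-x\|^2+\frac12\sum_{t=0}^{T-1}\gamma^2\|h^t\|^2+\sum_{t=0}^{T-1}\gamma^2\|h^t\|\,\|e^t\|+\sum_{t=0}^{T-1}\gamma\|h^t\|\,\|\hat e^t\|.$$
   Context: Problem: minimize $f(x)=\frac1n\sum_{i=1}^nf_i(x)$ subject to $g(x)=\frac1n\sum_{i=1}^ng_i(x)\le0$, with $f_i,g_i:\mathbb R^d\to\mathbb R$ convex. Compressors $\mathcal C_0,\mathcal C_1,\dots,\mathcal C_n$ are arbitrary (possibly randomized) maps $\mathbb R^d\to\mathbb R^d$. Safe-EF with bidirectional compression: given $x^0=w^0\in\mathbb R^d$, $\gamma,c>0$, $e_i^0=0$; for $t=0,\dots,T-1$: each worker sets $h_i^t=f_i'(x^t)\in\partial f_i(x^t)$ if $g(x^t)\le c$ and $h_i^t=g_i'(x^t)\in\partial g_i(x^t)$ otherwise; $v_i^t=\mathcal C_i(e_i^t+h_i^t)$; $e_i^{t+1}=e_i^t+h_i^t-v_i^t$; $v^t=\frac1n\sum_iv_i^t$, $w^{t+1}=w^t-\gamma v^t$, $x^{t+1}=x^t+\mathcal C_0(w^{t+1}-x^t)$. Notation: $h^t=\frac1n\sum_ih_i^t$, $e^t=\frac1n\sum_ie_i^t$, $\hat e^t=w^t-x^t$, $\mathcal B=\{t\in\{0,\dots,T-1\}:g(x^t)\le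 c\}$, $\mathcal N=\{0,\dots,T-1\}\setminus\mathcal B$. *)

From HB Require Import structures.
From mathcomp Require Import all_boot all_order all_algebra.
From mathcomp Require Import reals.
Set Implicit Arguments. Unset Strict Implicit. Unset Printing Implicit Defensive.
Import Order.TTheory GRing.Theory Num.Theory.
Local Open Scope ring_scope.

Section Defs.
Variables (R : realType) (d : nat).
Notation V := 'rV[R]_d.

Definition dotv (u v : V) : R := \sum_(k < d) u 0 k * v 0 k.
Definition enorm (u : V) : R := Num.sqrt (dotv u u).

Definition convex_fun (f : V -> R) : Prop :=
  forall (x y : V) (a : R), 0 <= a -> a <= 1 ->
    f (a *: x + (1 - a) *: y) <= a * f x + (1 - a) * f y.

Definition is_subgrad (f : V -> R) (s x : V) : Prop :=
  forall y : V, f x + dotv s (y - x) <= f y.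

Definition avgf (n : nat) (F : 'I_n -> V -> R) (x : V) : R :=
  n%:R^-1 * \sum_(i < n) F i x.
Definition avgv (n : nat) (v : 'I_n -> V) : V :=
  n%:R^-1 *: \sum_(i < n) v i.

(* Safe-EF with bidirectional compression, for one realization:
   - df t i y / dg t i y : the (sub)gradient returned by worker i at step t
     when queried at y (only its value at y = x^t matters);
   - C0 t : realization of the server compressor C_0 at step t;
   - C t i : realization of the worker compressor C_i at step t. *)
Variables (n : nat) (fi gi : 'I_n -> V -> R) (x0 : V) (gamma c : R)
  (df dg : nat -> 'I_n -> V -> V)
  (C0 : nat -> V -> V) (C : nat -> 'I_n -> V -> V).

Fixpoint sef_state (t : nat) : V * V * ('I_n -> V) :=
  match t with
  | 0 => (x0, x0, fun _ => 0)
  | t'.+1 =>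
    let: (x, w, e) := sef_state t' in
    let h i := if avgf gi x <= c then df t' i x else dg t' i x in
    let v i := C t' i (e i + h i) in
    let e' i := e i + h i - v i in
    let w' := w - gamma *: avgv v in
    (x + C0 t' (w' - x), w', e')
  end.

Definition sef_x t := (sef_state t).1.1.
Definition sef_w t := (sef_state t).1.2.
Definition sef_e t i := (sef_state t).2 i.
Definition sef_hi t i :=
  if avgf gi (sef_x t) <= c then df t i (sef_x t) else dg t i (sef_x t).
Definition sef_h t := avgv (sef_hi t).
Definition sef_ebar t := avgv (sef_e t).
Definition sef_ehat t := sef_w t - sef_x t.

End Defs.

From HB Require Import structures.
From mathcomp Require Import all_boot all_order all_algebra.
From mathcomp Require Import reals.
From mathcomp Require Import ring lra.
Set Implicit Arguments. Unset Strict Implicit. Unset Printing Implicit Defensive.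
Import Order.TTheory GRing.Theory Num.Theory.
Local Open Scope ring_scope.

(* The compression errors are absorbed by the virtual iterate
   z^t = w^t - gamma e^t, which performs an exact subgradient step
   z^{t+1} = z^t - gamma h^t.  Expanding ||z^{t+1} - x||^2 gives the usual
   descent inequality for <h^t, z^t - x>; since
   z^t - x = (x^t - x) + \hat e^t - gamma e^t, Cauchy-Schwarz turns the
   error terms into the last two sums, while the subgradient inequality
   bounds <h^t, x^t - x> below by f(x^t) - f(x) on good steps and by
   g(x^t) - g(x) > c - g(x) on bad ones.  Summing telescopes. *)

Section Euclidean.
Variables (R : realType) (d : nat).
Notation V := 'rV[R]_d.

Lemma dotvDl (u w v : V) : dotv (u + w) v = dotv u v + dotv w v.
Proof. by rewrite /dotv -big_split; apply: eq_bigr => k _; rewrite mxE mulrDl. Qed.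

Lemma dotvZl (a : R) (u v : V) : dotv (a *: u) v = a * dotv u v.
Proof. by rewrite /dotv mulr_sumr; apply: eq_bigr => k _; rewrite mxE mulrA. Qed.

Lemma dotvC (u v : V) : dotv u v = dotv v u.
Proof. by apply: eq_bigr => k _; rewrite mulrC. Qed.

Lemma dotvNl (u v : V) : dotv (- u) v = - dotv u v.
Proof. by rewrite -scaleN1r dotvZl mulN1r. Qed.

Lemma dotvBl (u w v : V) : dotv (u - w) v = dotv u v - dotv w v.
Proof. by rewrite dotvDl dotvNl. Qed.

Lemma dotvDr (v u w : V) : dotv v (u + w) = dotv v u + dotv v w.
Proof. by rewrite dotvC dotvDl !(dotvC v). Qed.

Lemma dotvZr (a : R) (v u : V) : dotv v (a *: u) = a * dotv v u.
Proof. by rewrite dotvC dotvZl dotvC. Qed.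

Lemma dotvNr (v u : V) : dotv v (- u) = - dotv v u.
Proof. by rewrite dotvC dotvNl dotvC. Qed.

Lemma dotvBr (v u w : V) : dotv v (u - w) = dotv v u - dotv v w.
Proof. by rewrite dotvDr dotvNr. Qed.

Lemma dotvvE (u : V) : dotv u u = \sum_(k < d) u 0 k ^+ 2.
Proof. by apply: eq_bigr => k _; rewrite expr2. Qed.

Lemma dotvv_ge0 (u : V) : 0 <= dotv u u.
Proof. by rewrite dotvvE sumr_ge0 // => k _; rewrite sqr_ge0. Qed.

Lemma dotvv_eq0_dotv (u v : V) : dotv u u = 0 -> dotv u v = 0.
Proof.
rewrite dotvvE => /psumr_eq0P u0.
rewrite /dotv big1 // => k _.
have /eqP := u0 (fun i _ => sqr_ge0 (u 0 i)) k isT.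
by rewrite sqrf_eq0 => /eqP ->; rewrite mul0r.
Qed.

Lemma enorm_ge0 (u : V) : 0 <= enorm u.
Proof. exact: sqrtr_ge0. Qed.

Lemma sqr_enorm (u : V) : enorm u ^+ 2 = dotv u u.
Proof. by rewrite sqr_sqrtr // dotvv_ge0. Qed.

Lemma enormN (u : V) : enorm (- u) = enorm u.
Proof. by rewrite /enorm dotvNl dotvNr opprK. Qed.

Lemma cauchy_schwarz (u v : V) : dotv u v <= enorm u * enorm v.
Proof.
have [a0 | a_neq0] := eqVneq (enorm u) 0.
  by rewrite dotvv_eq0_dotv ?a0 ?mul0r // -sqr_enorm a0 expr0n.
have [b0 | b_neq0] := eqVneq (enorm v) 0.
  by rewrite dotvC dotvv_eq0_dotv ?b0 ?mulr0 // -sqr_enorm b0 expr0n.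
have a_gt0 : 0 < enorm u by rewrite lt_def a_neq0 enorm_ge0.
have b_gt0 : 0 < enorm v by rewrite lt_def b_neq0 enorm_ge0.
(* expand 0 <= ||(|v|) u - (|u|) v||^2 *)
have := dotvv_ge0 (enorm v *: u - enorm u *: v).
rewrite !dotvBl !dotvBr !dotvZl !dotvZr (dotvC v u) -!sqr_enorm => expand_ge0.
have ab_gt0 : 0 < enorm u * enorm v by rewrite mulr_gt0.
have : 0 <= (enorm u * enorm v) * (enorm u * enorm v - dotv u v) by nra.
by rewrite pmulr_rge0 // subr_ge0.
Qed.

Lemma sqr_enormB_scale (a h : V) (g : R) :
  enorm (a - g *: h) ^+ 2 = enorm a ^+ 2 - 2 * g * dotv h a + g ^+ 2 * enorm h ^+ 2.
Proof. by rewrite !sqr_enorm !dotvBl !dotvBr !dotvZl !dotvZr (dotvC a h); ring. Qed.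

(* A step from a = p + q - g r in direction h only "sees" the p-part of a,
   up to error terms controlled by Cauchy-Schwarz. *)
Lemma perturbed_step_le (p q r h : V) (g : R) : 0 <= g ->
  g * dotv h p <=
    2^-1 * (enorm (p + q - g *: r) ^+ 2 - enorm (p + q - g *: r - g *: h) ^+ 2)
    + (2^-1 * (g ^+ 2 * enorm h ^+ 2)
       + (g ^+ 2 * enorm h * enorm r + g * enorm h * enorm q)).
Proof.
move=> g_ge0.
rewrite (sqr_enormB_scale (p + q - g *: r)) dotvBr dotvDr dotvZr.
have hq : - dotv h q <= enorm h * enorm q.
  by rewrite -dotvNr -(enormN q) cauchy_schwarz.
have hr : dotv h r <= enorm h * enorm r by exact: cauchy_schwarz.
have := ler_wpM2l g_ge0 hq.
have := ler_wpM2l (sqr_ge0 g) hr.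
rewrite expr2; lra.
Qed.

Lemma dotv_avgvl (n : nat) (u : 'I_n -> V) (y : V) :
  dotv (avgv u) y = n%:R^-1 * \sum_(i < n) dotv (u i) y.
Proof.
rewrite /avgv dotvZl; congr (_ * _).
elim/big_rec2: _ => [|i s1 s2 _ <-]; last by rewrite dotvDl.
by rewrite /dotv big1 // => k _; rewrite mxE mul0r.
Qed.

Lemma avgvB (n : nat) (u v : 'I_n -> V) :
  avgv (fun i => u i - v i) = avgv u - avgv v.
Proof. by rewrite /avgv sumrB scalerBr. Qed.

Lemma avgvD (n : nat) (u v : 'I_n -> V) :
  avgv (fun i => u i + v i) = avgv u + avgv v.
Proof. by rewrite /avgv big_split scalerDr. Qed.

Lemma subgrad_gap (f : V -> R) (s x y : V) :
  is_subgrad f s x -> f x - f y <= dotv s (x - y).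
Proof. by move=> /(_ y); rewrite dotvBr (dotvBr s x y); lra. Qed.

Lemma subgrad_avg (n : nat) (F : 'I_n -> V -> R) (s : 'I_n -> V) (x y : V) :
  (forall i, is_subgrad (F i) (s i) x) ->
  avgf F x - avgf F y <= dotv (avgv s) (x - y).
Proof.
move=> sub; rewrite dotv_avgvl /avgf -mulrBr -sumrB.
by rewrite ler_wpM2l ?invr_ge0 ?ler0n // ler_sum // => i _; apply: subgrad_gap.
Qed.

End Euclidean.

Lemma sum_le_telescope (R : realFieldType) (T : nat) (F G A : nat -> R) :
  (forall t, 0 <= A t) ->
  (forall t, F t <= 2^-1 * (A t - A t.+1) + G t) ->
  \sum_(t < T) F t <= 2^-1 * A 0%N + \sum_(t < T) G t.
Proof.
move=> A_ge0 step.
suff: \sum_(t < T) F t + 2^-1 * A T <= 2^-1 * A 0%N + \sum_(t < T) G t.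
  by have := A_ge0 T; lra.
elim: T => [|T IH]; first by rewrite !big_ord0; lra.
by rewrite !big_ord_recr /=; have := step T; lra.
Qed.

Section SafeEF.
Variables (R : realType) (d n : nat)
  (fi gi : 'I_n -> 'rV[R]_d -> R) (x0 : 'rV[R]_d) (gamma c : R)
  (df dg : nat -> 'I_n -> 'rV[R]_d -> 'rV[R]_d)
  (C0 : nat -> 'rV[R]_d -> 'rV[R]_d)
  (C : nat -> 'I_n -> 'rV[R]_d -> 'rV[R]_d).

Local Notation x := (sef_x gi x0 gamma c df dg C0 C).
Local Notation w := (sef_w gi x0 gamma c df dg C0 C).
Local Notation e := (sef_e gi x0 gamma c df dg C0 C).
Local Notation hi := (sef_hi gi x0 gamma c df dg C0 C).
Local Notation h := (sef_h gi x0 gamma c df dg C0 C).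
Local Notation ebar := (sef_ebar gi x0 gamma c df dg C0 C).
Local Notation ehat := (sef_ehat gi x0 gamma c df dg C0 C).

Lemma sef_wS t : w t.+1 = w t - gamma *: avgv (fun i => C t i (e t i + hi t i)).
Proof.
rewrite /sef_w /sef_e /sef_hi /sef_x /=.
by case: (sef_state _ _ _ _ _ _ _ _ t) => [[]].
Qed.

Lemma sef_eS t i : e t.+1 i = e t i + hi t i - C t i (e t i + hi t i).
Proof.
rewrite /sef_e /sef_hi /sef_x /=.
by case: (sef_state _ _ _ _ _ _ _ _ t) => [[]].
Qed.

Definition sef_z t := w t - gamma *: ebar t.

Lemma sef_z0 : sef_z 0 = x0.
Proof. by rewrite /sef_z /sef_ebar /avgv /sef_e /= big1 // !scaler0 subr0. Qed.

Lemma sef_zS t : sef_z t.+1 = sef_z t - gamma *: h t.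
Proof.
have ebarS : ebar t.+1 = ebar t + h t - avgv (fun i => C t i (e t i + hi t i)).
  rewrite /sef_ebar -avgvD -avgvB /avgv; congr (_ *: _).
  by apply: eq_bigr => i _; rewrite sef_eS.
rewrite /sef_z sef_wS ebarS !scalerBr scalerDr.
by rewrite opprB opprD !addrA addrAC subrK addrAC.
Qed.

Lemma sef_z_sub t y : sef_z t - y = (x t - y) + ehat t - gamma *: ebar t.
Proof. by rewrite /sef_z /sef_ehat [in RHS](addrC (x t - y)) addrA subrK addrAC. Qed.

Hypothesis df_subgrad :
  forall t i, is_subgrad (fi i) (df t i (x t)) (x t).
Hypothesis dg_subgrad :
  forall t i, is_subgrad (gi i) (dg t i (x t)) (x t).

Definition sef_gap (y : 'rV[R]_d) t :=
  if avgf gi (x t) <= c then avgf fi (x t) - avgf fi y else c - avgf gi y.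

Lemma sef_gap_le y t : sef_gap y t <= dotv (h t) (x t - y).
Proof.
rewrite /sef_gap /sef_h /sef_hi; case: ifP => [_ | /negbT].
  exact: subgrad_avg.
rewrite -ltNge => c_lt.
apply: le_trans (subgrad_avg y (dg_subgrad t)).
by rewrite lerD2r ltW.
Qed.

Lemma sef_descent_step y t : 0 <= gamma ->
  gamma * sef_gap y t <=
    2^-1 * (enorm (sef_z t - y) ^+ 2 - enorm (sef_z t.+1 - y) ^+ 2)
    + (2^-1 * (gamma ^+ 2 * enorm (h t) ^+ 2)
       + (gamma ^+ 2 * enorm (h t) * enorm (ebar t)
          + gamma * enorm (h t) * enorm (ehat t))).
Proof.
move=> gamma_ge0.
rewrite sef_zS [sef_z t - _ - y]addrAC sef_z_sub.
apply: le_trans (perturbed_step_le (x t - y) (ehat t) (ebar t) (h t) gamma_ge0).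
by rewrite ler_wpM2l // sef_gap_le.
Qed.

End SafeEF.

Theorem mainTheorem7 (R : realType) (d n : nat)
  (fi gi : 'I_n -> 'rV[R]_d -> R) (x0 : 'rV[R]_d) (gamma c : R)
  (df dg : nat -> 'I_n -> 'rV[R]_d -> 'rV[R]_d)
  (C0 : nat -> 'rV[R]_d -> 'rV[R]_d)
  (C : nat -> 'I_n -> 'rV[R]_d -> 'rV[R]_d) (T : nat) :
  (0 < n)%N -> 0 < gamma -> 0 < c ->
  (forall i, convex_fun (fi i)) -> (forall i, convex_fun (gi i)) ->
  (forall t i, is_subgrad (fi i)
     (df t i (sef_x gi x0 gamma c df dg C0 C t))
     (sef_x gi x0 gamma c df dg C0 C t)) ->
  (forall t i, is_subgrad (gi i)
     (dg t i (sef_x gi x0 gamma c df dg C0 C t))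
     (sef_x gi x0 gamma c df dg C0 C t)) ->
  forall x : 'rV[R]_d,
  let xt := sef_x gi x0 gamma c df dg C0 C in
  let ht := sef_h gi x0 gamma c df dg C0 C in
  let et := sef_ebar gi x0 gamma c df dg C0 C in
  let eh := sef_ehat gi x0 gamma c df dg C0 C in
  \sum_(t < T | avgf gi (xt t) <= c) gamma * (avgf fi (xt t) - avgf fi x)
  + \sum_(t < T | ~~ (avgf gi (xt t) <= c)) gamma * (c - avgf gi x)
  <= 2^-1 * enorm (x0 - x) ^+ 2
     + 2^-1 * \sum_(t < T) gamma ^+ 2 * enorm (ht t) ^+ 2
     + \sum_(t < T) gamma ^+ 2 * enorm (ht t) * enorm (et t)
     + \sum_(t < T) gamma * enorm (ht t) * enorm (eh t).
Proof.
(* Only the subgradient inequalities are used. *)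
move=> _ gamma_gt0 _ _ _ df_sub dg_sub x; cbv zeta.
set xt := sef_x gi x0 gamma c df dg C0 C.
have -> : \sum_(t < T | avgf gi (xt t) <= c) gamma * (avgf fi (xt t) - avgf fi x)
  + \sum_(t < T | ~~ (avgf gi (xt t) <= c)) gamma * (c - avgf gi x)
  = \sum_(t < T) gamma * sef_gap fi gi x0 gamma c df dg C0 C x t.
  rewrite [RHS](bigID (fun t : 'I_T => avgf gi (xt t) <= c)) /=.
  congr (_ + _); apply: eq_bigr => t; rewrite /sef_gap -/(xt t).
    by move=> ->.
  by move=> /negPf->.
rewrite -!addrA mulr_sumr -!big_split /=.
rewrite -[X in enorm (X - x)](@sef_z0 _ _ _ gi x0 gamma c df dg C0 C).
exact: (sum_le_telescope T (fun t => sqr_ge0 _)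
  (fun t => sef_descent_step df_sub dg_sub x t (ltW gamma_gt0))).
Qed.
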